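(* For every $n$-dimensional Hilbert space $\mathcal H$ and every $N\ge n$, the set $\mathcal F^{(1)}$ of $1$-erasure optimal $(N,n)$ dual pairs under the Frobenius norm is nonempty.
   Context: $\mathcal H$ is a complex Hilbert space of finite dimension $n$, inner product linear in the first argument. A finite sequence $F=\{f_i\}_{i=1}^N$ in $\mathcal H$ is a frame if there are constants $0<A\le B$ with $A\|f\|^2\le\sum_{i=1}^N|\langle f,f_i\rangle|^2\le B\|f\|^2$ for all $f$. A sequence $G=\{g_i\}_{i=1}^N$ is a dual of the frame $F$ if $f=\sum_{i=1}^N\langle f,g_i\rangle f_i$ for all $f\in\mathcal H$; then $(F,G)$ is an $(N,n)$ dual pair. The error operator for $\Lambda\subseteq\{1,\dots,N\}$ is $E_{\Lambda,F,G}f=\sum_{i\in\Lambda}\langle f,f_i\rangle g_i$. With $\|T\|_{\mathcal F}=\sqrt{\operatorname{tr}(T^*T)}$, set $\epsilon^{(1)}_{F,G}=\max_{1\le i\le N}\|E_{\{i\},F,G}\|_{\mathcal F}$, $\epsilon^{(1)}=\inf\{\epsilon^{(1)}_{F,G}:(F,G)\text{ an }(N,n)\text{ dual pair}\}$ and $\mathcal F^{(1)}=\{(F,G):\epsilon^{(1)}_{F,G}=\epsilon^{(1)}\}$. *)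

From HB Require Import structures.
From mathcomp Require Import all_boot all_order all_algebra.
From mathcomp Require Import complex.
From mathcomp Require Import boolp classical_sets reals.
Set Implicit Arguments. Unset Strict Implicit. Unset Printing Implicit Defensive.
Import Order.TTheory GRing.Theory Num.Theory.
Local Open Scope ring_scope.

(* The n-dimensional complex Hilbert space H is modelled as C^n = 'cV[R[i]]_n
   with the standard inner product, linear in the first argument. *)
Section FrameDefs.
Variable R : realType.
Local Notation C := R[i].

Definition cconj (z : C) : C := conjc z.

Definition ip (n : nat) (f g : 'cV[C]_n) : C := \sum_(k < n) f k 0 * cconj (g k 0).

Definition nrm2 (n : nat) (f : 'cV[C]_n) : R := complex.Re (ip f f).

Definition abs2 (z : C) : R := complex.Re (z * cconj z).

Definition is_frame (n N : nat) (F : 'I_N -> 'cV[C]_n) : Prop :=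
  exists A B : R, 0 < A /\ A <= B /\
    forall f : 'cV[C]_n,
      A * nrm2 f <= \sum_(i < N) abs2 (ip f (F i)) /\
      \sum_(i < N) abs2 (ip f (F i)) <= B * nrm2 f.

Definition is_dual (n N : nat) (F G : 'I_N -> 'cV[C]_n) : Prop :=
  forall f : 'cV[C]_n, f = \sum_(i < N) ip f (G i) *: F i.

Definition dual_pair (n N : nat) (F G : 'I_N -> 'cV[C]_n) : Prop :=
  is_frame F /\ is_dual F G.

Definition adjmx (m p : nat) (A : 'M[C]_(m, p)) : 'M[C]_(p, m) := map_mx cconj A^T.

(* matrix of E_{Lambda,F,G} f = sum_{i in Lambda} <f, f_i> g_i *)
Definition err_op (n N : nat) (Lam : {set 'I_N}) (F G : 'I_N -> 'cV[C]_n)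
  : 'M[C]_n := \sum_(i in Lam) (G i *m adjmx (F i)).

(* (G i *m adjmx (F i)) *m f = <f, F i> *: G i, since adjmx (F i) *m f is the 1x1 matrix <f, F i>. *)

(* Frobenius norm ||T||_F = sqrt(tr(T^* T)) (the trace is real, >= 0) *)
Definition frob (n : nat) (T : 'M[C]_n) : R := Num.sqrt (complex.Re (\tr (adjmx T *m T))).

(* eps^{(1)}_{F,G} = max_i ||E_{{i},F,G}||_F  (all terms >= 0) *)
Definition eps1FG (n N : nat) (F G : 'I_N -> 'cV[C]_n) : R :=
  \big[Num.max/0]_(i < N) frob (err_op [set i] F G).

Definition eps1 (n N : nat) : R :=
  inf [set e : R | exists F G : 'I_N -> 'cV[C]_n, dual_pair F G /\ e = eps1FG F G].

Definition opt1 (n N : nat) : set (('I_N -> 'cV[C]_n) * ('I_N -> 'cV[C]_n)) :=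
  [set FG | dual_pair FG.1 FG.2 /\ eps1FG FG.1 FG.2 = eps1 n N].

End FrameDefs.

(* The duality identity [f = sum_i <f, g_i> f_i], traced over an orthonormal
   basis, gives [n = sum_i <f_i, g_i>]; each term is at most
   [||f_i|| ||g_i|| = ||E_{{i},F,G}||_F], so every dual pair has
   [eps^{(1)}_{F,G} >= n / N].  The harmonic frame [f_i = (w^(k i))_{k < n}],
   [w] a primitive [N]-th root of unity, is tight with dual [g_i = f_i / N]
   and has [||f_i|| ||g_i|| = n / N] for all [i], so it attains the infimum. *)
From HB Require Import structures.
From mathcomp Require Import all_boot all_order all_algebra complex boolp classical_sets reals.
From mathcomp Require Import cyclic separable cyclotomic ring lra.
Set Implicit Arguments. Unset Strict Implicit. Unset Printing Implicit Defensive.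
Import Order.TTheory GRing.Theory Num.Theory.
Local Open Scope ring_scope.
Local Open Scope complex_scope.

Lemma closed_field_prim_root (F : closedFieldType) (N : nat) :
  (0 < N)%N -> N%:R != 0 :> F -> exists z : F, N.-primitive_root z.
Proof.
move=> N_gt0 NF_neq0.
have [r Dp] := closed_field_poly_normal ('X^N - 1 : {poly F}).
rewrite (monicP _) ?monicXnsubC // scale1r in Dp.
have rN1 : all N.-unity_root r by apply/allP=> z; rewrite -root_prod_XsubC -Dp.
have sz_r : (N < (size r).+1)%N by rewrite -(size_prod_XsubC r id) -Dp size_XnsubC.
have [|z] := hasP (has_prim_root N_gt0 rN1 _ sz_r); last by exists z.
by rewrite -separable_prod_XsubC -Dp separable_Xn_sub_1.
Qed.

Lemma sum_unity_root_eq0 (F : idomainType) (N : nat) (w : F) :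
  w ^+ N = 1 -> w != 1 -> \sum_(i < N) w ^+ i = 0.
Proof.
move=> wN1 w_neq1; apply/eqP.
have := subrX1 w N; rewrite wN1 subrr => /esym/eqP.
by rewrite mulf_eq0 subr_eq0 (negbTE w_neq1).
Qed.

Lemma unity_root_norm1 (F : numDomainType) (N : nat) (w : F) :
  (0 < N)%N -> w ^+ N = 1 -> `|w| = 1.
Proof.
move=> N_gt0 wN1; apply/eqP.
by rewrite -(pexpr_eq1 N_gt0 (normr_ge0 w)) -normrX wN1 normr1.
Qed.

Lemma sum_mul_le_sqrt (R : rcfType) (I : finType) (x y : I -> R) :
  \sum_i x i * y i <= Num.sqrt ((\sum_i x i ^+ 2) * (\sum_i y i ^+ 2)).
Proof.
set A := \sum_i x i ^+ 2; set B := \sum_i y i ^+ 2; set s := \sum_i x i * y i.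
have A_ge0 : 0 <= A by apply: sumr_ge0 => i _; rewrite sqr_ge0.
have B_ge0 : 0 <= B by apply: sumr_ge0 => i _; rewrite sqr_ge0.
have quad_ge0 t : 0 <= t ^+ 2 * A - 2 * t * s + B.
  have -> : t ^+ 2 * A - 2 * t * s + B = \sum_i (t * x i - y i) ^+ 2.
    rewrite /A /B /s !mulr_sumr -sumrB -big_split /=.
    by apply: eq_bigr => i _; ring.
  by apply: sumr_ge0 => i _; rewrite sqr_ge0.
have [s_le0|s_gt0] := leP s 0; first exact: le_trans s_le0 (sqrtr_ge0 _).
have [A0|A_neq0] := eqVneq A 0.
  have := quad_ge0 ((B + 1) / (2 * s)); rewrite A0 mulr0 add0r.
  have -> : 2 * ((B + 1) / (2 * s)) * s = B + 1 by field; lra.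
  lra.
have A_gt0 : 0 < A by rewrite lt_def A_neq0.
have := quad_ge0 (s / A).
have -> : (s / A) ^+ 2 * A - 2 * (s / A) * s + B = B - s ^+ 2 / A by field.
rewrite subr_ge0 ler_pdivrMr // => sA_le_B.
by rewrite -(ger0_norm (ltW s_gt0)) -sqrtr_sqr ler_sqrt ?mulr_ge0 // mulrC.
Qed.

Section InnerProduct.
Variable R : realType.
Local Notation C := R[i].
Local Notation Re := (@complex.Re R).
Local Notation Im := (@complex.Im R).

Lemma ipZl n (a : C) (f g : 'cV[C]_n) : ip (a *: f) g = a * ip f g.
Proof. by rewrite /ip mulr_sumr; apply: eq_bigr => k _; rewrite mxE mulrA. Qed.

Lemma ipZr n (a : C) (f g : 'cV[C]_n) : ip f (a *: g) = conjc a * ip f g.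
Proof.
rewrite /ip mulr_sumr; apply: eq_bigr => k _.
by rewrite /cconj mxE rmorphM mulrCA.
Qed.

Lemma ip_suml n (I : finType) (F : I -> 'cV[C]_n) (g : 'cV[C]_n) :
  ip (\sum_i F i) g = \sum_i ip (F i) g.
Proof.
rewrite /ip exchange_big /=; apply: eq_bigr => k _.
by rewrite summxE mulr_suml.
Qed.

Lemma ip_conj n (f g : 'cV[C]_n) : ip g f = conjc (ip f g).
Proof.
rewrite /ip rmorph_sum; apply: eq_bigr => k _.
by rewrite /cconj rmorphM /= conjcK mulrC.
Qed.

Lemma Re_realM (a : R) (z : C) : Re (a%:C * z) = a * Re z.
Proof. by case: z => x y /=; ring. Qed.

(* [f] seen as a real vector of length [2n]: real and imaginary parts *)
Definition rcoord n (f : 'cV[C]_n) (p : 'I_n * bool) : R :=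
  if p.2 then Re (f p.1 0) else Im (f p.1 0).

Lemma Re_ipE n (f g : 'cV[C]_n) :
  Re (ip f g) = \sum_(p : 'I_n * bool) rcoord f p * rcoord g p.
Proof.
rewrite (eq_bigr (fun p => rcoord f (p.1, p.2) * rcoord g (p.1, p.2))); last by case.
rewrite -(pair_bigA _ (fun k b => rcoord f (k, b) * rcoord g (k, b))).
rewrite /ip (raddf_sum (@complex.Re R)); apply: eq_bigr => k _.
rewrite big_bool /rcoord /cconj /=.
by case: (f k 0) => ? ?; case: (g k 0) => ? ? /=; ring.
Qed.

Lemma nrm2E n (f : 'cV[C]_n) : nrm2 f = \sum_(p : 'I_n * bool) rcoord f p ^+ 2.
Proof. by rewrite /nrm2 Re_ipE; under eq_bigr do rewrite -expr2. Qed.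

Lemma nrm2Z n (a : R) (f : 'cV[C]_n) : nrm2 (a%:C *: f) = a ^+ 2 * nrm2 f.
Proof.
by rewrite /nrm2 ipZl ipZr conjc_real mulrA -rmorphM Re_realM -expr2.
Qed.

Lemma Re_ip_le_sqrt n (f g : 'cV[C]_n) : Re (ip f g) <= Num.sqrt (nrm2 f * nrm2 g).
Proof. by rewrite Re_ipE !nrm2E; apply: sum_mul_le_sqrt. Qed.

Lemma frob_rank1 n (f g : 'cV[C]_n) :
  frob (g *m adjmx f) = Num.sqrt (nrm2 g * nrm2 f).
Proof.
rewrite /frob /nrm2 /ip mulrC; congr Num.sqrt.
rewrite !(raddf_sum (@complex.Re R)) mulr_suml.
apply: eq_bigr => b _; rewrite mulr_sumr !mxE (raddf_sum (@complex.Re R)).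
apply: eq_bigr => a _.
rewrite /adjmx !mxE !big_ord1 !mxE /cconj.
by case: (g a 0) => ? ?; case: (f b 0) => ? ? /=; ring.
Qed.

Lemma mul_conjc_norm1 (u : C) : `|u| = 1 -> u * conjc u = 1.
Proof. by move=> u1; rewrite -sqr_normc u1 expr1n. Qed.

Lemma ip_delta n (k : 'I_n) (g : 'cV[C]_n) : ip (delta_mx k 0) g = conjc (g k 0).
Proof.
rewrite /ip (bigD1 k) //= big1 => [|j /negbTE jk]; last by rewrite mxE jk mul0r.
by rewrite mxE !eqxx mul1r addr0.
Qed.

End InnerProduct.

Section DualPairs.
Variables (R : realType) (n N : nat).
Local Notation C := R[i].
Implicit Types F G : 'I_N -> 'cV[C]_n.

Lemma err_op1 F G i : err_op [set i] F G = G i *m adjmx (F i).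
Proof. by rewrite /err_op big_set1. Qed.

Lemma dual_sum_ip F G : is_dual F G -> \sum_i ip (F i) (G i) = n%:R.
Proof.
move=> dFG.
have coord1 k : \sum_i conjc (G i k 0) * F i k 0 = 1.
  have := congr1 (fun v : 'cV[C]_n => v k 0) (dFG (delta_mx k 0)).
  rewrite /= mxE !eqxx /= summxE => e1; apply: etrans (esym e1); apply: eq_bigr => i _.
  by rewrite mxE ip_delta.
have -> : n%:R = \sum_(k < n) (1 : C) by rewrite sumr_const card_ord.
under [RHS]eq_bigr => k _ do rewrite -(coord1 k).
rewrite exchange_big /=; apply: eq_bigr => i _.
by apply: eq_bigr => k _; rewrite mulrC.
Qed.

Lemma dim_le_card_eps1FG F G : is_dual F G -> n%:R <= N%:R * eps1FG F G.
Proof.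
move=> /dual_sum_ip sum_ip.
have -> : n%:R = complex.Re (\sum_i ip (F i) (G i)).
  by rewrite sum_ip (raddfMn (@complex.Re R)).
have -> : N%:R * eps1FG F G = \sum_(i < N) eps1FG F G.
  by rewrite sumr_const card_ord mulr_natl.
rewrite (raddf_sum (@complex.Re R)).
apply: ler_sum => i _; apply: le_trans (le_bigmax _ _ i).
by rewrite err_op1 frob_rank1 mulrC Re_ip_le_sqrt.
Qed.

Lemma scaled_dual_tight F (a : R) :
  0 < a -> is_dual F (fun i => a%:C *: F i) -> is_frame F.
Proof.
move=> a_gt0 dFa.
have nrm2_sum f : nrm2 f = a * \sum_i abs2 (ip f (F i)).
  rewrite /nrm2 {1}(dFa f) ip_suml (raddf_sum (@complex.Re R)) mulr_sumr.
  apply: eq_bigr => i _.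
  by rewrite ipZl ipZr conjc_real (ip_conj f (F i)) -mulrA; apply: Re_realM.
exists a^-1, a^-1; split; first by rewrite invr_gt0.
split=> // f; rewrite nrm2_sum mulrA mulVf ?mul1r ?lexx //.
by rewrite gt_eqF.
Qed.

Lemma eps1FG_minimal_opt1 F G :
    dual_pair F G ->
    (forall F' G', dual_pair F' G' -> eps1FG F G <= eps1FG F' G') ->
  @opt1 R n N (F, G).
Proof.
move=> FG_dual FG_min; split=> //=; apply/eqP; rewrite eq_le; apply/andP; split.
- apply: lb_le_inf; first by exists (eps1FG F G), F, G.
  by move=> _ [F' [G' [FG'_dual ->]]]; exact: FG_min.
- apply: ge_inf; last by exists F, G.
  by exists (eps1FG F G) => _ [F' [G' [FG'_dual ->]]]; exact: FG_min.
Qed.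

End DualPairs.

Section HarmonicFrame.
Variables (R : realType) (n N : nat) (z : R[i]).
Local Notation C := R[i].
Hypotheses (z_prim : N.-primitive_root z) (n_le_N : (n <= N)%N).

Let N_gt0 : (0 < N)%N := prim_order_gt0 z_prim.

Lemma prim_root_norm1 : `|z| = 1.
Proof. exact: unity_root_norm1 N_gt0 (prim_expr_order z_prim). Qed.

Lemma harmonic_orthogonal (k m : 'I_n) :
  \sum_(i < N) z ^+ (k * i) * conjc (z ^+ (m * i)) = (k == m)%:R * N%:R.
Proof.
have zX_norm1 j : `|z ^+ j| = 1 by rewrite normrX prim_root_norm1 expr1n.
have [<-|k_neq_m] := eqVneq k m.
  rewrite mul1r (eq_bigr (fun _ => 1)) => [|i _]; last exact: mul_conjc_norm1.
  by rewrite sumr_const card_ord.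
pose w := z ^+ k * conjc (z ^+ m).
have -> : \sum_(i < N) z ^+ (k * i) * conjc (z ^+ (m * i)) = \sum_(i < N) w ^+ i.
  by apply: eq_bigr => i _; rewrite !exprM rmorphXn -exprMn.
rewrite mul0r; apply: sum_unity_root_eq0.
  rewrite exprMn -rmorphXn -!exprM !(mulnC _ N) !exprM (prim_expr_order z_prim).
  by rewrite !expr1n rmorph1 mulr1.
apply: contraNneq k_neq_m => w1.
have : z ^+ k = z ^+ m.
  by rewrite -[LHS]mulr1 -(mul_conjc_norm1 (zX_norm1 m)) mulrCA -/w w1 mulr1.
move/eqP; rewrite (eq_prim_root_expr z_prim) !modn_small => [/eqP/val_inj //||].
- exact: leq_trans (ltn_ord m) n_le_N.
- exact: leq_trans (ltn_ord k) n_le_N.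
Qed.

Definition harmonic_frame (i : 'I_N) : 'cV[C]_n := \col_(k < n) z ^+ (k * i).
Definition harmonic_dual (i : 'I_N) : 'cV[C]_n := (N%:R^-1 : R)%:C *: harmonic_frame i.

Lemma harmonic_is_dual : is_dual harmonic_frame harmonic_dual.
Proof.
move=> f; apply/matrixP => k j; rewrite (ord1 j) summxE.
have -> : \sum_(i < N) (ip f (harmonic_dual i) *: harmonic_frame i) k 0 =
    \sum_(m < n) (N%:R^-1 : R)%:C * f m 0 *
      \sum_(i < N) z ^+ (k * i) * conjc (z ^+ (m * i)).
  under [RHS]eq_bigr => m _ do rewrite mulr_sumr.
  rewrite [RHS]exchange_big /=; apply: eq_bigr => i _.
  rewrite /harmonic_dual mxE ipZr conjc_real /ip mulr_sumr mulr_suml.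
  by apply: eq_bigr => m _; rewrite /cconj !mxE; ring.
rewrite [RHS](bigD1 k) //= [X in _ + X]big1 => [|m m_neq_k]; last first.
  by rewrite harmonic_orthogonal eq_sym (negbTE m_neq_k) mul0r mulr0.
rewrite harmonic_orthogonal eqxx mul1r addr0 mulrAC.
rewrite -(rmorph_nat (@real_complex R)) -rmorphM mulVf ?mul1r //.
by rewrite pnatr_eq0 -lt0n.
Qed.

Lemma harmonic_dual_pair : dual_pair harmonic_frame harmonic_dual.
Proof.
split; last exact: harmonic_is_dual.
apply: (scaled_dual_tight (a := N%:R^-1)); last exact: harmonic_is_dual.
by rewrite invr_gt0 ltr0n.
Qed.

Lemma harmonic_eps1FG : eps1FG harmonic_frame harmonic_dual <= n%:R / N%:R.
Proof.
have nrm2_frame i : nrm2 (harmonic_frame i) = n%:R.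
  rewrite /nrm2 /ip (eq_bigr (fun _ => 1)) => [|k _].
    by rewrite sumr_const card_ord (raddfMn (@complex.Re R)).
  by rewrite /cconj mxE mul_conjc_norm1 // normrX prim_root_norm1 expr1n.
apply: bigmax_le => [|i _]; first by rewrite divr_ge0 ?ler0n.
rewrite err_op1 frob_rank1 nrm2Z !nrm2_frame.
have -> : (N%:R^-1) ^+ 2 * n%:R * n%:R = (n%:R / N%:R) ^+ 2 :> R.
  by rewrite expr2 exprMn; field; rewrite pnatr_eq0 -lt0n.
by rewrite sqrtr_sqr ger0_norm // divr_ge0 ?ler0n.
Qed.

End HarmonicFrame.

Lemma dual_pair_dim0 (R : realType) (N : nat) (F G : 'I_N -> 'cV[R[i]]_0) :
  dual_pair F G.
Proof.
split; last by move=> f; rewrite !flatmx0.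
exists 1, 1; split; first exact: ltr01.
split=> // f; have ip0 g : ip f g = 0 by rewrite /ip big_ord0.
by rewrite /nrm2 /abs2 ip0 big1 => [|i _]; rewrite ?ip0 ?mul0r ?mulr0.
Qed.

Local Open Scope classical_set_scope.
Theorem corollary3p3 (R : realType) (n N : nat) :
  (n <= N)%N -> @opt1 R n N !=set0.
Proof.
case: N => [|N] n_le_N.
  move: n_le_N; rewrite leqn0 => /eqP n0; subst n.
  exists (fun _ => 0, fun _ => 0); apply: eps1FG_minimal_opt1 => [|F G _].
    exact: dual_pair_dim0.
  by rewrite /eps1FG !big_ord0.
have NC_neq0 : N.+1%:R != 0 :> R[i] by rewrite pnatr_eq0.
have [z z_prim] := closed_field_prim_root (ltn0Sn N) NC_neq0.
exists (harmonic_frame n z, harmonic_dual n z).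
apply: eps1FG_minimal_opt1 => [|F G [_ FG_dual]]; first exact: harmonic_dual_pair.
apply: le_trans (harmonic_eps1FG n z_prim) _.
by rewrite ler_pdivrMr ?ltr0n // mulrC dim_le_card_eps1FG.
Qed.
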